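(* Let $(\omega,\rho)$ be a half-flat ${\rm SU}(3)$-structure on the Lie algebra $\mathfrak g=\mathfrak h_3\oplus\mathfrak h_3$ (i.e. a compatible normalised pair of stable forms on $\mathfrak g$ with positive definite induced metric, $d\rho=0$ and $d(\omega^2)=0$). Then $\omega(\mathfrak z,\mathfrak z)\neq0$, where $\mathfrak z$ is the centre of $\mathfrak g$. In particular there is a standard basis in which $\omega$ is a nonzero multiple of $e^1\wedge f^1+e^2\wedge f^2+e^3\wedge f^3$.
   Context: A standard basis of $\mathfrak h_3\oplus\mathfrak h_3$ ($\mathfrak h_3$ the three-dimensional Heisenberg algebra) is a basis $e_1,e_2,e_3,f_1,f_2,f_3$ with dual basis $e^1,\dots,f^3$ such that $de^3=e^1\wedge e^2$, $df^3=f^1\wedge f^2$, all other basis one-forms closed; the centre is $\mathrm{span}\{e_3,f_3\}$. For a stable three-form $\rho$ on an oriented six-dimensional space: $K_\rho(v)=\kappa((v\lrcorner\rho)\wedge\rho)$, $\lambda(\rho)=\frac16\mathrm{tr}K_\rho^2$, $J_\rho=K_\rho/\sqrt{|\lambda(\rho)|}$. A compatible normalised pair $(\omega,\rho)$: $\omega$ nondegenerate, $\rho$ stable, $\omega\wedge\rho=0$, $J_\rho^*\rho\wedge\rho=\frac23\omega^3$ (orientation by $\omega^3$); its induced metric is $\varepsilon\omega(\cdot,J_\rho\cdot)$, $\varepsilon=\mathrm{sign}\lambda(\rho)$; it is an ${\rm SU}(3)$-structure iff this metric is positive definite. *)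

(* Coordinates on g = h3 (+) h3 w.r.t. a fixed
   standard basis e1,e2,e3,f1,f2,f3, indexed 0,1,2,3,4,5.  A vector is a map
   nat -> R (only indices < 6 matter); a k-form is given by its components
   alpha [i1;...;ik] = alpha(e_i1,...,e_ik) : a map list nat -> R. *)
From Stdlib Require Import Reals List Arith.
Import ListNotations.
Open Scope R_scope.

Definition vec := nat -> R.
Definition form := list nat -> R.

Fixpoint sumL (f : list nat -> R) (L : list (list nat)) : R :=
  match L with nil => 0 | ix :: L' => f ix + sumL f L' end.
Definition sumN (f : nat -> R) (n : nat) : R :=
  fold_right (fun a acc => f a + acc) 0 (seq 0 n).
Definition sum6 (f : nat -> R) : R :=
  f 0%nat + f 1%nat + f 2%nat + f 3%nat + f 4%nat + f 5%nat.

Fixpoint tuples (n m : nat) : list (list nat) :=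
  match n with
  | O => [nil]
  | S n' => flat_map (fun i => map (cons i) (tuples n' m)) (seq 0 m)
  end.

(* Levi-Civita symbol of a list: sign of the permutation (via inversions),
   0 if an entry is repeated *)
Definition cmp (a b : nat) : R :=
  if Nat.ltb a b then 1 else if Nat.ltb b a then -1 else 0.
Fixpoint eps (l : list nat) : R :=
  match l with
  | nil => 1
  | a :: l' => fold_right (fun b acc => cmp a b * acc) 1 l' * eps l'
  end.

Definition valid (k : nat) (ix : list nat) : Prop :=
  length ix = k /\ Forall (fun i => (i < 6)%nat) ix.

Definition alternating (k : nat) (alpha : form) : Prop :=
  forall l1 a b l2, valid k (l1 ++ a :: b :: l2) ->
    alpha (l1 ++ b :: a :: l2) = - alpha (l1 ++ a :: b :: l2).

(* wedge product of a p-form and a q-form (determinant convention,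
   e^1 /\ e^2 (e_1,e_2) = 1) *)
Definition wedge (p q : nat) (alpha beta : form) : form := fun ix =>
  / INR (fact p * fact q) *
  sumL (fun s => eps s
          * alpha (map (fun k => nth k ix 0%nat) (firstn p s))
          * beta (map (fun k => nth k ix 0%nat) (skipn p s)))
       (tuples (p + q) (p + q)).

Definition zero_form : form := fun _ => 0.
Definition oneform (q : nat -> R) : form :=
  fun ix => match ix with [j] => q j | _ => 0 end.
Definition basis1 (i : nat) : form :=
  oneform (fun j => if Nat.eqb j i then 1 else 0).

(* structure equations of h3 (+) h3: de^3 = e^1/\e^2, df^3 = f^1/\f^2 *)
Definition de (m : nat) : form :=
  if Nat.eqb m 2 then wedge 1 1 (basis1 0) (basis1 1)
  else if Nat.eqb m 5 then wedge 1 1 (basis1 3) (basis1 4)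
  else zero_form.

(* Lie bracket, determined by d alpha (x,y) = - alpha([x,y]) *)
Definition struct_const (m p q : nat) : R := - de m [p; q].
Definition bracket (x y : vec) : vec := fun m =>
  sum6 (fun p => sum6 (fun q => struct_const m p q * x p * y q)).

Fixpoint remove_at (n : nat) (l : list nat) : list nat :=
  match l, n with
  | nil, _ => nil
  | _ :: l', O => l'
  | a :: l', S n' => a :: remove_at n' l'
  end.

(* Chevalley-Eilenberg differential on forms on g:
   d alpha (x0,..,xk) = sum_{a<b} (-1)^(a+b) alpha([xa,xb], x0,..^..^..,xk) *)
Definition dform (alpha : form) : form := fun ix =>
  sumN (fun a => sumN (fun b =>
     if Nat.ltb a b then
       (-1) ^ (a + b) * sum6 (fun m =>
          struct_const m (nth a ix 0%nat) (nth b ix 0%nat)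
          * alpha (m :: remove_at a (remove_at b ix)))
     else 0) (length ix)) (length ix).

Definition interior (v : vec) (alpha : form) : form :=
  fun ix => sum6 (fun i => v i * alpha (i :: ix)).
Definition form_eval2 (omega : form) (x y : vec) : R :=
  sum6 (fun i => sum6 (fun j => x i * y j * omega [i; j])).
Definition unitvec (j : nat) : vec := fun k => if Nat.eqb k j then 1 else 0.

Definition top : list nat := [0; 1; 2; 3; 4; 5]%nat.
Definition omega3 (omega : form) : form := wedge 4 2 (wedge 2 2 omega omega) omega.

(* kappa : Lambda^5 -> V (x) Lambda^6, relative to the volume form
   nu = nu0 e^{123} /\ f^{123}: kappa(eta) = u with u _| nu = eta *)
Definition kappa (nu0 : R) (eta : form) : vec := fun i =>
  / (INR (fact 5) * nu0) * sumL (fun J => eps (i :: J) * eta J) (tuples 5 6).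

(* matrix of K_rho (column j = K_rho(e_j)), relative to volume nu0 *)
Definition Kmat (nu0 : R) (rho : form) (i j : nat) : R :=
  kappa nu0 (wedge 2 3 (interior (unitvec j) rho) rho) i.
Definition lambda (nu0 : R) (rho : form) : R :=
  / 6 * sum6 (fun i => sum6 (fun j => Kmat nu0 rho i j * Kmat nu0 rho j i)).

(* stability: lambda(rho) <> 0 (w.r.t. any volume form; we use e^{123}/\f^{123}) *)
Definition stable (rho : form) : Prop := lambda 1 rho <> 0.

(* J_rho, with the orientation/volume form given by omega^3 *)
Definition Jmat (omega rho : form) (i j : nat) : R :=
  let nu0 := omega3 omega top in
  Kmat nu0 rho i j / sqrt (Rabs (lambda nu0 rho)).
Definition applyJ (omega rho : form) (y : vec) : vec :=
  fun i => sum6 (fun j => Jmat omega rho i j * y j).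

Definition Jpull (omega rho : form) : form := fun ix =>
  match ix with
  | [i1; i2; i3] =>
      sum6 (fun a => sum6 (fun b => sum6 (fun c =>
        Jmat omega rho a i1 * Jmat omega rho b i2 * Jmat omega rho c i3
        * rho [a; b; c])))
  | _ => 0
  end.

Definition sign_lambda (omega rho : form) : R :=
  if Rlt_dec 0 (lambda (omega3 omega top) rho) then 1 else -1.

Definition induced_metric (omega rho : form) (x y : vec) : R :=
  sign_lambda omega rho * form_eval2 omega x (applyJ omega rho y).

Definition nondegenerate (omega : form) : Prop :=
  forall x : vec, (forall y : vec, form_eval2 omega x y = 0) ->
    forall i, (i < 6)%nat -> x i = 0.

Definition compatible_normalised_pair (omega rho : form) : Prop :=
  alternating 2 omega /\ alternating 3 rho /\
  nondegenerate omega /\ stable rho /\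
  (forall ix, valid 5 ix -> wedge 2 3 omega rho ix = 0) /\
  wedge 3 3 (Jpull omega rho) rho top = 2 / 3 * omega3 omega top.

Definition SU3_structure (omega rho : form) : Prop :=
  compatible_normalised_pair omega rho /\
  forall x : vec, (exists i, (i < 6)%nat /\ x i <> 0) ->
    induced_metric omega rho x x > 0.

Definition half_flat (omega rho : form) : Prop :=
  SU3_structure omega rho /\
  (forall ix, valid 4 ix -> dform rho ix = 0) /\
  (forall ix, valid 5 ix -> dform (wedge 2 2 omega omega) ix = 0).

Definition in_centre (z : vec) : Prop :=
  forall (x : vec) (i : nat), (i < 6)%nat -> bracket z x i = 0.

(* A standard basis: basis vectors e'_a = sum_i P i a e_i, dual basis
   one-forms theta_k = sum_i Q k i e^i, satisfying the structure equations
   d theta_2 = theta_0/\theta_1, d theta_5 = theta_3/\theta_4, others closed. *)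
Definition standard_basis (Q P : nat -> nat -> R) : Prop :=
  (forall k a, (k < 6)%nat -> (a < 6)%nat ->
     sum6 (fun i => Q k i * P i a) = if Nat.eqb k a then 1 else 0) /\
  (forall k ix, (k < 6)%nat -> valid 2 ix ->
     dform (oneform (Q k)) ix =
     (if Nat.eqb k 2 then wedge 1 1 (oneform (Q 0%nat)) (oneform (Q 1%nat))
      else if Nat.eqb k 5 then wedge 1 1 (oneform (Q 3%nat)) (oneform (Q 4%nat))
      else zero_form) ix).

From Pilot Require Import Defs.
From Stdlib Require Import Reals List Lra Lia.
Import ListNotations.
Open Scope R_scope.

(* (1) Closedness of rho forces rho(e3, f3, .) = 0.  Hence the 5-form
   (e3 _| rho) /\ rho vanishes on every index list containing both 2 and 5,
   so K_rho(e3), and with it J_rho(e3), is central.  If omega(e3, f3) were 0,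
   then omega(e3, J_rho e3) = 0 and the induced metric would be degenerate
   at e3, contradicting positivity.
   (2) Closedness of omega^2 gives two Pluecker-type quadratic relations
   among the coefficients of omega.  With w = omega(e3, f3) <> 0 we write
   down an explicit standard basis: e1, e2 are shifted by central vectors to
   become omega-orthogonal to the centre, and f1, f2 are moreover recombined
   by the adjugate of the 2x2 Gram matrix M = (omega(e_a', f_b)) so that
   omega becomes diagonal; f3 is rescaled by the determinant of that
   recombination, which preserves the structure equations.  Nondegeneracy of
   omega makes det M <> 0.  Duality, the structure equations and the normal
   form are then rational identities checked coordinatewise. *)

Lemma tuples_valid n m l :
  In l (tuples n m) -> length l = n /\ Forall (fun i => (i < m)%nat) l.
Proof.
  revert l; induction n as [|n IH]; intros l Hl; simpl in Hl.
  - destruct Hl as [<-|[]]. split; auto.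
  - apply in_flat_map in Hl as [i [Hi Hl]].
    apply in_map_iff in Hl as [l' [<- Hl']].
    apply in_seq in Hi. destruct (IH l' Hl') as [Hlen Hall].
    split; [simpl; auto|]. constructor; auto; lia.
Qed.

Lemma eps_nonzero_NoDup l : eps l <> 0 -> NoDup l.
Proof.
  assert (Hrep : forall a l, In a l ->
            fold_right (fun b acc => cmp a b * acc) 1 l = 0).
  { intros a l'; induction l' as [|b l' IH]; simpl; intros Hin; [destruct Hin|].
    destruct Hin as [->|Hin].
    - unfold cmp. rewrite Nat.ltb_irrefl. ring.
    - rewrite IH; auto. ring. }
  induction l as [|a l IH]; simpl; intros Hl; constructor.
  - intro Hin. apply Hl. rewrite Hrep; auto. ring.
  - apply IH. intro E. apply Hl. rewrite E. ring.
Qed.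

Lemma sumL_vanish f L : (forall x, In x L -> f x = 0) -> sumL f L = 0.
Proof. induction L; simpl; intros H; auto. rewrite H, IHL; auto. ring. Qed.

Lemma NoDup_full s n : NoDup s -> length s = n ->
  Forall (fun i => (i < n)%nat) s -> forall k, (k < n)%nat -> In k s.
Proof.
  intros Hnd Hl Hf k Hk.
  assert (Hincl : incl (seq 0 n) s).
  { apply NoDup_length_incl; [exact Hnd | rewrite length_seq; lia |].
    intros x Hx. rewrite Forall_forall in Hf. apply in_seq. specialize (Hf x Hx). lia. }
  apply Hincl, in_seq. lia.
Qed.

Lemma valid_of_check (l : list nat) n :
  length l = n -> forallb (fun i => Nat.ltb i 6) l = true -> valid n l.
Proof.
  intros Hl Hb. split; auto. rewrite Forall_forall. rewrite forallb_forall in Hb.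
  intros x Hx. apply Nat.ltb_lt. auto.
Qed.

Lemma valid2 a b : (a < 6)%nat -> (b < 6)%nat -> valid 2 [a;b].
Proof. intros. split; [reflexivity|]. repeat (apply Forall_cons; [lia|]). apply Forall_nil. Qed.

Lemma valid3 a b c : (a < 6)%nat -> (b < 6)%nat -> (c < 6)%nat -> valid 3 [a;b;c].
Proof. intros. split; [reflexivity|]. repeat (apply Forall_cons; [lia|]). apply Forall_nil. Qed.

Section Alternating2.
Variable w : form.
Hypothesis Hw : alternating 2 w.

Lemma alt2_swap a b : (a < 6)%nat -> (b < 6)%nat -> w [a;b] = - w [b;a].
Proof.
  intros. pose proof (Hw [] a b [] ltac:(apply valid2; auto)) as E.
  simpl in E. rewrite E. ring.
Qed.

Lemma alt2_diag a : (a < 6)%nat -> w [a;a] = 0.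
Proof. intros. pose proof (Hw [] a a [] ltac:(apply valid2; auto)). simpl in *. lra. Qed.
End Alternating2.

Section Alternating3.
Variable r : form.
Hypothesis Hr : alternating 3 r.

Lemma alt3_swap12 a b c : (a < 6)%nat -> (b < 6)%nat -> (c < 6)%nat ->
  r [a;b;c] = - r [b;a;c].
Proof.
  intros. pose proof (Hr [] a b [c] ltac:(apply valid3; auto)) as E.
  simpl in E. rewrite E. ring.
Qed.

Lemma alt3_swap23 a b c : (a < 6)%nat -> (b < 6)%nat -> (c < 6)%nat ->
  r [a;b;c] = - r [a;c;b].
Proof.
  intros. pose proof (Hr [a] b c [] ltac:(apply valid3; auto)) as E.
  simpl in E. rewrite E. ring.
Qed.

Lemma alt3_rep12 a c : (a < 6)%nat -> (c < 6)%nat -> r [a;a;c] = 0.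
Proof. intros. pose proof (Hr [] a a [c] ltac:(apply valid3; auto)). simpl in *. lra. Qed.

Lemma alt3_rep23 a c : (a < 6)%nat -> (c < 6)%nat -> r [c;a;a] = 0.
Proof. intros. pose proof (Hr [c] a a [] ltac:(apply valid3; auto)). simpl in *. lra. Qed.

Lemma alt3_rep13 a c : (a < 6)%nat -> (c < 6)%nat -> r [a;c;a] = 0.
Proof. intros. rewrite alt3_swap23, alt3_rep12 by auto. ring. Qed.

Lemma alt3_repeat a b c : (a < 6)%nat -> (b < 6)%nat -> (c < 6)%nat ->
  (a = b \/ b = c \/ a = c) -> r [a;b;c] = 0.
Proof. intros ? ? ? [->|[->| ->]]; [apply alt3_rep12|apply alt3_rep23|apply alt3_rep13]; auto. Qed.
End Alternating3.

Ltac sort2 w Hw :=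
  repeat match goal with
  | |- context [w [?a;?a]] => rewrite (alt2_diag w Hw a) by lia
  | |- context [w [?a;?b]] =>
      lazymatch eval vm_compute in (Nat.ltb b a) with
      | true => rewrite (alt2_swap w Hw a b) by lia
      end
  end.

Ltac sort3 r Hr :=
  repeat match goal with
  | |- context [r [?a;?a;?c]] => rewrite (alt3_rep12 r Hr a c) by lia
  | |- context [r [?c;?a;?a]] => rewrite (alt3_rep23 r Hr a c) by lia
  | |- context [r [?a;?c;?a]] => rewrite (alt3_rep13 r Hr a c) by lia
  | |- context [r [?a;?b;?c]] =>
      lazymatch eval vm_compute in (Nat.ltb b a) with
      | true => rewrite (alt3_swap12 r Hr a b c) by lia
      | false => lazymatch eval vm_compute in (Nat.ltb c b) with
         | true => rewrite (alt3_swap23 r Hr a b c) by lia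
         end
      end
  end.

Ltac expand_coords :=
  unfold dform, sumN, sum6, struct_const, de, wedge, basis1, oneform, zero_form, cmp;
  simpl; unfold cmp; simpl.

Lemma centre_e3_f3 k : (k = 2 \/ k = 5)%nat -> in_centre (unitvec k).
Proof.
  intros Hk x i Hi. unfold bracket.
  destruct Hk as [-> | ->]; destruct i as [|[|[|[|[|[|i]]]]]]; try lia;
    unfold sum6, struct_const, de, wedge, basis1, oneform, zero_form, unitvec, cmp;
    simpl; unfold cmp; simpl; field.
Qed.

(* As e3, f3 are central and the only nonzero brackets
   are [e1,e2] = -e3 and [f1,f2] = -f3, the values d rho(f1,f2,e3,e_k) and
   d rho(e1,e2,f3,f_k) are +-rho(e3,f3,e_k) and +-rho(e3,f3,f_k). *)
Lemma closed_rho_centre r : alternating 3 r ->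
  (forall ix, valid 4 ix -> dform r ix = 0) ->
  forall k, (k < 6)%nat -> r [2;5;k]%nat = 0.
Proof.
  intros Hr Hd k Hk.
  assert (Hd' : forall ix, length ix = 4%nat ->
            forallb (fun i => Nat.ltb i 6) ix = true -> dform r ix = 0)
    by (intros; apply Hd, valid_of_check; auto).
  destruct k as [|[|[|[|[|[|k]]]]]]; try lia.
  - pose proof (Hd' [3;4;2;0]%nat eq_refl eq_refl) as H.
    revert H; expand_coords; sort3 r Hr; lra.
  - pose proof (Hd' [3;4;2;1]%nat eq_refl eq_refl) as H.
    revert H; expand_coords; sort3 r Hr; lra.
  - apply alt3_rep13; auto.
  - pose proof (Hd' [0;1;5;3]%nat eq_refl eq_refl) as H.
    revert H; expand_coords; sort3 r Hr; lra.
  - pose proof (Hd' [0;1;5;4]%nat eq_refl eq_refl) as H.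
    revert H; expand_coords; sort3 r Hr; lra.
  - apply alt3_rep23; auto.
Qed.

Lemma nth_lt6 (J : list nat) p :
  Forall (fun i => (i < 6)%nat) J -> (nth p J 0%nat < 6)%nat.
Proof.
  intros Hf. destruct (Nat.lt_ge_cases p (length J)).
  - rewrite Forall_forall in Hf. apply Hf, nth_In; auto.
  - rewrite nth_overflow by lia. lia.
Qed.

Lemma interior_unitvec k (alpha : form) ix :
  (k < 6)%nat -> Defs.interior (unitvec k) alpha ix = alpha (k :: ix).
Proof.
  intros Hk. destruct k as [|[|[|[|[|[|k]]]]]]; try lia;
    unfold Defs.interior, sum6, unitvec; simpl; ring.
Qed.

Section CentralContraction.
Variable r : form.
Hypothesis Hr : alternating 3 r.
Hypothesis Hcentre : forall k, (k < 6)%nat -> r [2;5;k]%nat = 0.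

Lemma rho_centre_vanish a b c : (a < 6)%nat -> (b < 6)%nat -> (c < 6)%nat ->
  (a = 2 \/ b = 2 \/ c = 2)%nat -> (a = 5 \/ b = 5 \/ c = 5)%nat -> r [a;b;c] = 0.
Proof.
  intros Ha Hb Hc H2 H5.
  destruct H2 as [->|[->| ->]]; destruct H5 as [E|[E|E]]; try lia; subst.
  - apply Hcentre; auto.
  - rewrite (alt3_swap23 r Hr), Hcentre by lia. ring.
  - rewrite (alt3_swap12 r Hr), Hcentre by lia. ring.
  - rewrite (alt3_swap12 r Hr), (alt3_swap23 r Hr), Hcentre by lia. ring.
  - rewrite (alt3_swap23 r Hr), (alt3_swap12 r Hr), Hcentre by lia. ring.
  - rewrite (alt3_swap23 r Hr), (alt3_swap12 r Hr), (alt3_swap23 r Hr), Hcentre by lia. ring.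
Qed.

(* A term rho(e3,a,b) rho(c,d,e) of (e3 _| rho) /\ rho vanishes as soon as
   both e3 and f3 occur among a,...,e: either the first factor repeats e3
   or contains f3, or the second factor contains both. *)
Lemma rho_term_vanish a b c d e :
  (a < 6)%nat -> (b < 6)%nat -> (c < 6)%nat -> (d < 6)%nat -> (e < 6)%nat ->
  In 2%nat [a;b;c;d;e] -> In 5%nat [a;b;c;d;e] -> r [2%nat;a;b] * r [c;d;e] = 0.
Proof.
  intros Ha Hb Hc Hd He I2 I5. simpl in I2, I5.
  destruct (Nat.eq_dec a 2) as [Ea|Ea];
    [rewrite (alt3_repeat r Hr 2 a b) by lia; ring|].
  destruct (Nat.eq_dec b 2) as [Eb|Eb];
    [rewrite (alt3_repeat r Hr 2 a b) by lia; ring|].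
  destruct (Nat.eq_dec a 5) as [Fa|Fa];
    [rewrite (rho_centre_vanish 2 a b) by lia; ring|].
  destruct (Nat.eq_dec b 5) as [Fb|Fb];
    [rewrite (rho_centre_vanish 2 a b) by lia; ring|].
  rewrite (rho_centre_vanish c d e) by lia. ring.
Qed.

(* The 5-form (e3 _| rho) /\ rho vanishes on index lists containing both
   e3 and f3: every nonzero term of the wedge sum is a permutation of the
   list, so it contains both indices. *)
Lemma contraction_wedge_vanish J :
  length J = 5%nat -> Forall (fun i => (i < 6)%nat) J ->
  In 2%nat J -> In 5%nat J -> wedge 2 3 (Defs.interior (unitvec 2) r) r J = 0.
Proof.
  intros Hl Hf I2 I5. unfold wedge. rewrite sumL_vanish; [ring|].
  intros s Hs. apply tuples_valid in Hs as [Hsl Hsf].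
  destruct (Req_dec (eps s) 0) as [E|E]; [rewrite E; ring|].
  assert (Hperm : forall x, In x J -> In x (map (fun k => nth k J 0%nat) s)).
  { intros x Hx. destruct (In_nth J x 0%nat Hx) as [p [Hp <-]].
    apply (in_map (fun k => nth k J 0%nat)).
    apply (NoDup_full s 5); auto using eps_nonzero_NoDup. lia. }
  apply Hperm in I2, I5.
  destruct s as [|s0 [|s1 [|s2 [|s3 [|s4 [|]]]]]]; simpl in Hsl; try lia.
  simpl in *. rewrite interior_unitvec by lia. rewrite Rmult_assoc.
  rewrite rho_term_vanish; auto using nth_lt6. ring.
Qed.

Lemma K_e3_central nu0 i : (i < 6)%nat -> i <> 2%nat -> i <> 5%nat ->
  Kmat nu0 r i 2 = 0.
Proof.
  intros Hi H2 H5. unfold Kmat, kappa. rewrite sumL_vanish; [ring|].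
  intros J HJ. apply tuples_valid in HJ as [Hl Hf].
  destruct (Req_dec (eps (i :: J)) 0) as [E|E]; [rewrite E; ring|].
  assert (Hfull := NoDup_full (i :: J) 6 (eps_nonzero_NoDup _ E)
                     ltac:(simpl; lia) ltac:(constructor; auto)).
  rewrite contraction_wedge_vanish; auto; [ring| |].
  - destruct (Hfull 2%nat ltac:(lia)) as [->|]; [lia|auto].
  - destruct (Hfull 5%nat ltac:(lia)) as [->|]; [lia|auto].
Qed.
End CentralContraction.

Lemma metric_at_e3 omega rho :
  induced_metric omega rho (unitvec 2) (unitvec 2)
  = sign_lambda omega rho * sum6 (fun j => Jmat omega rho j 2 * omega [2;j]%nat).
Proof. unfold induced_metric, form_eval2, applyJ, sum6, unitvec. cbn -[Jmat]. ring. Qed.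

Lemma half_flat_omega_centre omega rho : half_flat omega rho -> omega [2;5]%nat <> 0.
Proof.
  intros [[[Ha2 [Ha3 _]] Hpos] [Hdr _]] E.
  pose proof (closed_rho_centre rho Ha3 Hdr) as Hcentre.
  assert (HJ : forall j, (j < 6)%nat -> j <> 2%nat -> j <> 5%nat ->
                 Jmat omega rho j 2 = 0).
  { intros j ? ? ?. unfold Jmat. cbv zeta.
    rewrite (K_e3_central rho Ha3 Hcentre) by auto. unfold Rdiv; ring. }
  assert (He3 : exists i, (i < 6)%nat /\ unitvec 2 i <> 0)
    by (exists 2%nat; split; [lia | unfold unitvec; simpl; lra]).
  specialize (Hpos _ He3). rewrite metric_at_e3 in Hpos. unfold sum6 in Hpos.
  rewrite (HJ 0%nat), (HJ 1%nat), (HJ 3%nat), (HJ 4%nat), alt2_diag, E in Hpos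
    by (auto; lia).
  lra.
Qed.

(* On these index lists only the brackets [e1,e2] = -e3 and [f1,f2] = -f3
   contribute to the differential of a 4-form. *)
Lemma dform_01234 (a : form) :
  dform a [0;1;2;3;4]%nat = a [2;2;3;4]%nat + a [5;0;1;2]%nat.
Proof. expand_coords. field. Qed.

Lemma dform_01345 (a : form) :
  dform a [0;1;3;4;5]%nat = a [2;3;4;5]%nat + a [5;0;1;5]%nat.
Proof. expand_coords. field. Qed.

Lemma closed_omega2_relations w : alternating 2 w ->
  (forall ix, valid 5 ix -> dform (wedge 2 2 w w) ix = 0) ->
  w [0;1]%nat * w [2;5]%nat - w [0;2]%nat * w [1;5]%nat + w [0;5]%nat * w [1;2]%nat = 0 /\
  w [2;3]%nat * w [4;5]%nat - w [2;4]%nat * w [3;5]%nat + w [2;5]%nat * w [3;4]%nat = 0.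
Proof.
  intros Hw Hd. split.
  - pose proof (Hd _ (valid_of_check [0;1;2;3;4]%nat 5 eq_refl eq_refl)) as H.
    rewrite dform_01234 in H. revert H. expand_coords. sort2 w Hw.
    intro H. field_simplify in H. lra.
  - pose proof (Hd _ (valid_of_check [0;1;3;4;5]%nat 5 eq_refl eq_refl)) as H.
    rewrite dform_01345 in H. revert H. expand_coords. sort2 w Hw.
    intro H. field_simplify in H. lra.
Qed.

(* The adapted basis, built from the coefficients o i j = omega(e_i, e_j)
   under the standing assumption w_centre = omega(e3, f3) <> 0. *)
Section AdaptedBasis.
Variable om : form.
Definition o (i j : nat) : R := om [i;j].
Definition w_centre := o 2 5.
(* e_a' = e_a + s_a e3 + t_a f3 (a = 1,2) is omega-orthogonal to the centre *)
Definition s1 := - o 0 5 / w_centre.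
Definition t1 := o 0 2 / w_centre.
Definition s2 := - o 1 5 / w_centre.
Definition t2 := o 1 2 / w_centre.
(* f_b + al_b e3 + be_b f3 (b = 1,2) is omega-orthogonal to the centre *)
Definition al3 := - o 3 5 / w_centre.
Definition be3 := - o 2 3 / w_centre.
Definition al4 := - o 4 5 / w_centre.
Definition be4 := - o 2 4 / w_centre.
(* Gram matrix M_ab = omega(e_a', f_b) *)
Definition M00 := o 0 3 + s1 * o 2 3 - t1 * o 3 5.
Definition M01 := o 0 4 + s1 * o 2 4 - t1 * o 4 5.
Definition M10 := o 1 3 + s2 * o 2 3 - t2 * o 3 5.
Definition M11 := o 1 4 + s2 * o 2 4 - t2 * o 4 5.
Definition gram_det := M00 * M11 - M01 * M10.
(* gram_det times w_centre^2, a polynomial in the coefficients of omega *)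
Definition N00 := o 0 3 * w_centre - o 0 5 * o 2 3 - o 0 2 * o 3 5.
Definition N01 := o 0 4 * w_centre - o 0 5 * o 2 4 - o 0 2 * o 4 5.
Definition N10 := o 1 3 * w_centre - o 1 5 * o 2 3 - o 1 2 * o 3 5.
Definition N11 := o 1 4 * w_centre - o 1 5 * o 2 4 - o 1 2 * o 4 5.
Definition gram_num := N00 * N11 - N01 * N10.
(* B = adj(M) / w_centre recombines f1, f2; f3 is rescaled by det B *)
Definition B33 := M11 / w_centre.
Definition B34 := - M01 / w_centre.
Definition B43 := - M10 / w_centre.
Definition B44 := M00 / w_centre.
Definition detB := B33 * B44 - B34 * B43.
Definition u3 := B33 * al3 + B43 * al4.
Definition v3 := B33 * be3 + B43 * be4.
Definition u4 := B34 * al3 + B44 * al4.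
Definition v4 := B34 * be3 + B44 * be4.
(* inverse of B *)
Definition C33 := B44 / detB.
Definition C34 := - B34 / detB.
Definition C43 := - B43 / detB.
Definition C44 := B33 / detB.
(* the common value omega(e_a', f_a') *)
Definition scale := gram_det / w_centre.

(* new_basis i a = i-th coordinate of the a-th new basis vector *)
Definition new_basis (i a : nat) : R :=
  match a, i with
  | 0,0 => 1 | 0,2 => s1 | 0,5 => t1
  | 1,1 => 1 | 1,2 => s2 | 1,5 => t2
  | 2,2 => 1
  | 3,3 => B33 | 3,4 => B43 | 3,2 => u3 | 3,5 => v3
  | 4,3 => B34 | 4,4 => B44 | 4,2 => u4 | 4,5 => v4
  | 5,5 => detB
  | _,_ => 0 end.

(* new_dual k i = i-th coefficient of the k-th dual one-form *)
Definition new_dual (k i : nat) : R :=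
  match k, i with
  | 0,0 => 1
  | 1,1 => 1
  | 2,0 => - s1 | 2,1 => - s2 | 2,2 => 1
  | 2,3 => - (u3 * C33 + u4 * C43) | 2,4 => - (u3 * C34 + u4 * C44)
  | 3,3 => C33 | 3,4 => C34
  | 4,3 => C43 | 4,4 => C44
  | 5,0 => - t1 / detB | 5,1 => - t2 / detB | 5,5 => 1 / detB
  | 5,3 => - (v3 * C33 + v4 * C43) / detB | 5,4 => - (v3 * C34 + v4 * C44) / detB
  | _,_ => 0 end.
End AdaptedBasis.

Ltac unfold_basis := unfold new_dual, new_basis, C33, C34, C43, C44, u3, u4, v3, v4,
  detB, B33, B34, B43, B44, scale, gram_det, M00, M01, M10, M11,
  al3, al4, be3, be4, s1, s2, t1, t2, w_centre, o.

(* Every denominator occurring in the construction is a nonzero multiple of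
   w_centre or of gram_num; this closes the side conditions left by [field]. *)
Ltac denominators_nonzero HN :=
  unfold gram_num, N00, N01, N10, N11, w_centre, o in HN;
  repeat split; auto; intro Hc; apply HN; lra.

Lemma gram_num_nonzero om : om [2;5]%nat <> 0 -> gram_det om <> 0 -> gram_num om <> 0.
Proof.
  intros Hw Hd.
  assert (E : gram_det om = gram_num om / (w_centre om * w_centre om))
    by (unfold gram_num, N00, N01, N10, N11; unfold_basis; field; auto).
  intro C. apply Hd. rewrite E, C. unfold Rdiv. ring.
Qed.

Lemma singular2_left_kernel a b c d : a * d - b * c = 0 ->
  exists x y, (x <> 0 \/ y <> 0) /\ x * a + y * c = 0 /\ x * b + y * d = 0.
Proof.
  intros D.
  destruct (Req_dec c 0) as [Hc|Hc]; [destruct (Req_dec a 0) as [Ha|Ha]|].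
  - destruct (Req_dec d 0) as [Hd|Hd]; [destruct (Req_dec b 0) as [Hb|Hb]|].
    + exists 1, 0. split; [left; lra|]. subst. split; ring.
    + exists d, (- b). split; [right; lra|]. subst. split; ring.
    + exists d, (- b). split; [left; lra|]. subst. split; ring.
  - exists c, (- a). split; [right; lra|]. split; nra.
  - exists c, (- a). split; [left; lra|]. split; nra.
Qed.

Lemma form_eval2_coords om (x y : vec) :
  form_eval2 om x y = sum6 (fun j => y j * sum6 (fun i => x i * om [i;j])).
Proof. unfold form_eval2, sum6. ring. Qed.

Section NormalForm.
Variable om : form.
Hypothesis Ha : alternating 2 om.
Hypothesis Hw : om [2;5]%nat <> 0.
(* the two relations of [closed_omega2_relations], solved for omega(e1,e2)
   and omega(f1,f2) *)
Hypothesis E01 : om [0;1]%nat =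
  (om [0;2]%nat * om [1;5]%nat - om [0;5]%nat * om [1;2]%nat) / om [2;5]%nat.
Hypothesis E34 : om [3;4]%nat =
  (om [2;4]%nat * om [3;5]%nat - om [2;3]%nat * om [4;5]%nat) / om [2;5]%nat.

(* Nondegeneracy: a1 e1' + a2 e2' lies in the kernel of omega whenever
   (a1, a2) is in the left kernel of M, so M is invertible. *)
Lemma gram_det_nonzero : nondegenerate om -> gram_det om <> 0.
Proof.
  intros Hnd D. unfold gram_det in D.
  destruct (singular2_left_kernel _ _ _ _ D) as [a1 [a2 [Hnz [H3 H4]]]].
  set (x := fun k => a1 * new_basis om k 0 + a2 * new_basis om k 1).
  assert (Hcol : forall j, (j < 6)%nat -> sum6 (fun i => x i * om [i;j]) = 0).
  { intros j Hj. destruct j as [|[|[|[|[|[|j]]]]]]; try lia;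
      [| | | rewrite <- H3 | rewrite <- H4 |];
      unfold sum6, x; simpl; sort2 om Ha; rewrite ?E01; unfold_basis; field; auto. }
  assert (Hker : forall y, form_eval2 om x y = 0).
  { intro y. rewrite form_eval2_coords. unfold sum6 at 1. rewrite !Hcol by lia. ring. }
  pose proof (Hnd x Hker 0%nat ltac:(lia)) as X0.
  pose proof (Hnd x Hker 1%nat ltac:(lia)) as X1.
  unfold x in X0, X1. simpl in X0, X1. lra.
Qed.

Hypothesis Hdet : gram_det om <> 0.

Lemma new_basis_dual k a : (k < 6)%nat -> (a < 6)%nat ->
  sum6 (fun i => new_dual om k i * new_basis om i a) = if Nat.eqb k a then 1 else 0.
Proof.
  intros Hk Ha'. pose proof (gram_num_nonzero om Hw Hdet) as HN. unfold sum6.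
  destruct k as [|[|[|[|[|[|k]]]]]]; try lia; destruct a as [|[|[|[|[|[|a]]]]]]; try lia;
    simpl; unfold_basis; field; denominators_nonzero HN.
Qed.

Lemma new_basis_structure k ix : (k < 6)%nat -> valid 2 ix ->
  dform (oneform (new_dual om k)) ix =
  (if Nat.eqb k 2 then wedge 1 1 (oneform (new_dual om 0%nat)) (oneform (new_dual om 1%nat))
   else if Nat.eqb k 5 then wedge 1 1 (oneform (new_dual om 3%nat)) (oneform (new_dual om 4%nat))
   else zero_form) ix.
Proof.
  intros Hk [Hl Hf]. pose proof (gram_num_nonzero om Hw Hdet) as HN.
  destruct ix as [|i [|j [|]]]; simpl in Hl; try lia.
  apply Forall_inv in Hf as Hi. apply Forall_inv_tail, Forall_inv in Hf as Hj.
  destruct k as [|[|[|[|[|[|k]]]]]]; try lia;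
  destruct i as [|[|[|[|[|[|i]]]]]]; try lia; destruct j as [|[|[|[|[|[|j]]]]]]; try lia;
    expand_coords; unfold_basis; field; denominators_nonzero HN.
Qed.

Lemma omega_normal_form ix : valid 2 ix ->
  om ix = scale om * (wedge 1 1 (oneform (new_dual om 0%nat)) (oneform (new_dual om 3%nat)) ix
                    + wedge 1 1 (oneform (new_dual om 1%nat)) (oneform (new_dual om 4%nat)) ix
                    + wedge 1 1 (oneform (new_dual om 2%nat)) (oneform (new_dual om 5%nat)) ix).
Proof.
  intros [Hl Hf]. pose proof (gram_num_nonzero om Hw Hdet) as HN.
  destruct ix as [|i [|j [|]]]; simpl in Hl; try lia.
  apply Forall_inv in Hf as Hi. apply Forall_inv_tail, Forall_inv in Hf as Hj.
  destruct i as [|[|[|[|[|[|i]]]]]]; try lia; destruct j as [|[|[|[|[|[|j]]]]]]; try lia;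
    expand_coords; sort2 om Ha; rewrite ?E01, ?E34; unfold_basis; field; denominators_nonzero HN.
Qed.
End NormalForm.

Theorem lemma4p6 (omega rho : form) :
  half_flat omega rho ->
  (exists z1 z2 : vec, in_centre z1 /\ in_centre z2 /\
     form_eval2 omega z1 z2 <> 0) /\
  (exists (Q P : nat -> nat -> R) (c : R),
     standard_basis Q P /\ c <> 0 /\
     forall ix, valid 2 ix ->
       omega ix = c * (wedge 1 1 (oneform (Q 0%nat)) (oneform (Q 3%nat)) ix
                      + wedge 1 1 (oneform (Q 1%nat)) (oneform (Q 4%nat)) ix
                      + wedge 1 1 (oneform (Q 2%nat)) (oneform (Q 5%nat)) ix)).
Proof.
  intros Hhf. pose proof (half_flat_omega_centre _ _ Hhf) as Hw.
  destruct Hhf as [[[Ha [_ [Hnd _]]] _] [_ Hdw]].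
  destruct (closed_omega2_relations omega Ha Hdw) as [R1 R2].
  assert (E01 : omega [0;1]%nat = (omega [0;2]%nat * omega [1;5]%nat
                   - omega [0;5]%nat * omega [1;2]%nat) / omega [2;5]%nat)
    by (field_simplify_eq; auto; lra).
  assert (E34 : omega [3;4]%nat = (omega [2;4]%nat * omega [3;5]%nat
                   - omega [2;3]%nat * omega [4;5]%nat) / omega [2;5]%nat)
    by (field_simplify_eq; auto; lra).
  pose proof (gram_det_nonzero omega Ha Hw E01 Hnd) as Hdet.
  split.
  - exists (unitvec 2), (unitvec 5).
    split; [|split]; [apply centre_e3_f3; auto .. |].
    replace (form_eval2 omega (unitvec 2) (unitvec 5)) with (omega [2;5]%nat)
      by (unfold form_eval2, sum6, unitvec; simpl; ring).
    exact Hw.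
  - exists (new_dual omega), (new_basis omega), (scale omega).
    split; [split|split].
    + intros k a Hk Ha'. apply new_basis_dual; auto.
    + intros k ix Hk Hix. apply new_basis_structure; auto.
    + unfold scale, w_centre, o, Rdiv. apply Rmult_integral_contrapositive_currified; auto.
      apply Rinv_neq_0_compat; auto.
    + intros ix Hix. apply omega_normal_form; auto.
Qed.
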